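(* Fix $\sigma\in(0,\tfrac12)$. The following assertions hold for problem $(P_{\lambda,\mu})$ described in the context: (i) for every $\lambda>0$ there exists $\mu_0^{*}(\lambda)>0$ such that $(P_{\lambda,\mu})$ has no solution for every $\mu\in(0,\mu_0^{*}(\lambda))$; (ii) there exists $\lambda^{*}>0$ such that for every $\lambda\in(0,\lambda^{*})$ there exists $\mu_0^{**}(\lambda)>\mu_0^{*}(\lambda)$ such that $(P_{\lambda,\mu})$ has no solution for every $\mu>\mu_0^{**}(\lambda)$.
   Context: Let $\sigma\in(0,\tfrac12)$ be fixed and let $g(s)=s^2(1-s)$ for $s\in[0,1]$. For $\lambda>0$, $\mu>0$ define the step function $a_{\lambda,\mu}:[0,1]\to\mathbb{R}$ by $a_{\lambda,\mu}(t)=\lambda$ if $t\in[0,\sigma]\cup[1-\sigma,1]$ and $a_{\lambda,\mu}(t)=-\mu$ if $t\in(\sigma,1-\sigma)$. Problem $(P_{\lambda,\mu})$ is: $-u''(t)=a_{\lambda,\mu}(t)\,g(u(t))$ for $t\in(0,1)$, $0\le u(t)\le 1$ on $[0,1]$, $u'(0)=u'(1)=0$. A solution of $(P_{\lambda,\mu})$ is a function $u\in\mathcal{C}^1([0,1])$ with $u'$ absolutely continuous, $0<u(t)<1$ for all $t\in[0,1]$, which satisfies the differential equation for a.e. $t\in(0,1)$ and the Neumann conditions $u'(0)=u'(1)=0$. *)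

From HB Require Import structures.
From mathcomp Require Import all_boot all_order all_algebra.
From mathcomp Require Import all_classical all_reals all_analysis.
Set Implicit Arguments. Unset Strict Implicit. Unset Printing Implicit Defensive.
Import Order.TTheory GRing.Theory Num.Theory.
Import numFieldNormedType.Exports.
Local Open Scope classical_set_scope.
Local Open Scope ring_scope.

Section Defs.
Variable R : realType.

Definition gfun (s : R) : R := s ^+ 2 * (1 - s).

Definition aweight (sigma lam mu t : R) : R :=
  if (t <= sigma) || (1 - sigma <= t) then lam else - mu.

Definition abs_continuous_on (a b : R) (f : R -> R) : Prop :=
  forall eps : R, 0 < eps -> exists2 delta : R, 0 < delta &
    forall (n : nat) (x y : 'I_n -> R),
      (forall i, a <= x i /\ x i <= y i /\ y i <= b) ->
      (forall i j : 'I_n, (i < j)%N -> y i <= x j) ->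
      \sum_(i < n) (y i - x i) < delta ->
      \sum_(i < n) `|f (y i) - f (x i)| < eps.

(* u is a solution of (P_{lambda,mu}): u in C^1([0,1]) with derivative v (one-sided at
   the endpoints), v absolutely continuous on [0,1], 0 < u < 1 on [0,1],
   -v'(t) = a(t) g(u(t)) for a.e. t in (0,1), and v(0) = v(1) = 0. *)
Definition is_solution (sigma lam mu : R) (u : R -> R) : Prop :=
  exists v : R -> R,
    (forall t : R, t \in `[0, 1] ->
       (fun s => (u s - u t) / (s - t)) @ within (fun s => s \in `[0, 1] /\ s != t) (nbhs t)
         --> v t) /\
    {within `[0, 1], continuous v} /\
    abs_continuous_on 0 1 v /\
    (forall t : R, t \in `[0, 1] -> 0 < u t /\ u t < 1) /\
    {ae (@lebesgue_measure R), forall t : R, t \in `]0, 1[ ->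
        derivable v t 1 /\ - (derive1 v t) = aweight sigma lam mu t * gfun (u t)} /\
    v 0 = 0 /\ v 1 = 0.

End Defs.

From HB Require Import structures.
From mathcomp Require Import all_boot all_order all_algebra.
From mathcomp Require Import all_classical all_reals all_analysis.
From mathcomp Require Import ring lra.
Set Implicit Arguments. Unset Strict Implicit. Unset Printing Implicit Defensive.
Import Order.TTheory GRing.Theory Num.Theory.
Import numFieldNormedType.Exports.
Local Open Scope classical_set_scope.
Local Open Scope ring_scope.

(* Let v = u', A = -v(sigma) and B = v(1 - sigma).  Since -v' = a g(u), v decreases on
   [0, sigma] and [1 - sigma, 1] and increases in between, so |u'| <= A + B, and if
   m <= g(u) <= S on [0, 1] then lam sigma m <= A, B <= lam sigma S and
   mu (1 - 2 sigma) m <= A + B <= mu (1 - 2 sigma) S.  Take S = sup g(u).  When A + B <= S/4,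
   u oscillates so little that g(u) >= S/16 everywhere, and the bounds become two-sided.
   For mu small, A + B <= mu S is small, which forces lam sigma / 8 <= mu (1 - 2 sigma);
   for lam small, A + B <= 2 lam sigma S is small, which forces mu (1 - 2 sigma) <= 32 lam sigma.
   As v is only absolutely continuous, the integrations are done with a mean value
   inequality for absolutely continuous functions whose derivative is bounded a.e., proved
   with Cousin's lemma and the outer regularity of Lebesgue measure. *)

Lemma ler_slack (R : realFieldType) (a b C : R) : (forall e, 0 < e -> a <= b + e * C) -> a <= b.
Proof.
move=> slack; apply/ler_addgt0Pr => e e0.
have C1 : 0 < `|C| + 1 by rewrite ltr_wpDl.
pose q := e / (`|C| + 1).
have q0 : 0 < q by rewrite divr_gt0.
have qC : q * C <= q * `|C| by rewrite ler_wpM2l ?(ltW q0) ?real_ler_norm ?num_real.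
have qe : q * `|C| + q = e by rewrite -[q in _ + q]mulr1 -mulrDr /q mulrVK // unitfE gt_eqF.
have := slack q q0; lra.
Qed.

Section cousin.
Variable R : realType.

Definition fine_partition (P : R -> R -> R -> Prop) (x y : R) (n : nat) (p tau : nat -> R) :=
  [/\ p 0%N = x, p n = y &
      forall i, (i < n)%N -> [/\ p i <= tau i, tau i <= p i.+1 & P (tau i) (p i) (p i.+1)]].

Lemma fine_partition_le P x y n p tau : fine_partition P x y n p tau ->
  forall i j, (i <= j <= n)%N -> p i <= p j.
Proof.
case=> _ _ pieces i; elim=> [|j IHj]; first by rewrite leqn0 => /andP[/eqP-> _].
rewrite leq_eqVlt ltnS => /andP[/orP[/eqP-> //|ij] jn].
have [pt tp _] := pieces j jn.
by apply: le_trans (IHj _) (le_trans pt tp); rewrite ij (ltnW jn).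
Qed.

Lemma cousin (P : R -> R -> R -> Prop) (x y : R) : x <= y ->
  (forall t, x <= t -> t <= y -> exists2 d, 0 < d & forall a b, x <= a -> a <= t -> t <= b ->
      b <= y -> t - d < a -> b < t + d -> P t a b) ->
  exists n p tau, fine_partition P x y n p tau.
Proof.
move=> xy gauge.
pose S := [set s | x <= s <= y /\ exists n p tau, fine_partition P x s n p tau].
have Sx : S x by split; [rewrite lexx xy | exists 0%N, (fun=> x), (fun=> x)].
have hS : has_sup S by split; [exists x | exists y => s [/andP[]]].
set c := sup S.
have xc : x <= c by exact: sup_upper_bound.
have cy : c <= y by apply: ge_sup; [exists x | move=> s [/andP[]]].
have [d d0 Pd] := gauge c xc cy.
have [s Ss cds] := sup_adherent d0 hS.
have [/andP[xs sy] [n [p [tau [p0 pn pieces]]]]] := Ss.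
have sc : s <= c by exact: sup_upper_bound.
pose e := Num.min (c + d / 2) y.
have ce : c <= e by rewrite /e le_min cy andbT lerDl divr_ge0 // ltW.
have ecd : e < c + d.
  by apply: (@le_lt_trans _ _ (c + d / 2)); [rewrite ge_min lexx | lra].
have Se : S e.
  split; first by rewrite (le_trans xc ce) ge_min lexx orbT.
  exists n.+1, (fun i => if (i <= n)%N then p i else e),
    (fun i => if (i < n)%N then tau i else c).
  split => //=; first by rewrite ltnn.
  move=> i; rewrite ltnS => iN; have [ilt|ni] := ltnP i n.
    by rewrite (ltnW ilt); apply: pieces.
  have -> : i = n by apply/eqP; rewrite eqn_leq iN ni.
  rewrite leqnn pn; split => //.
  by apply: Pd; rewrite ?ge_min ?lexx ?orbT //; lra.
have ec : e <= c by exact: sup_upper_bound.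
have yc : y <= c by move: ec; rewrite ge_min => /orP[|//]; lra.
have ey : e = y by apply/eqP; rewrite eq_le (le_trans yc ce) andbT ge_min lexx orbT.
by move: Se; rewrite ey => -[_].
Qed.

End cousin.

Section mean_value.
Variable R : realType.

Definition has_derivative_within (D : set R) (f : R -> R) (t L : R) :=
  forall e, 0 < e -> exists2 d, 0 < d & forall s, D s -> `|s - t| < d ->
    `|f s - f t - L * (s - t)| <= e * `|s - t|.

Definition upper_slope_le (x y : R) (f : R -> R) (K t : R) :=
  forall e, 0 < e -> exists2 d, 0 < d & forall a b, x <= a -> a <= t -> t <= b -> b <= y ->
    t - d < a -> b < t + d -> f b - f a <= (K + e) * (b - a).

Lemma has_derivative_withinN (D : set R) (f : R -> R) (t L : R) :
  has_derivative_within D f t L -> has_derivative_within D (- f) t (- L).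
Proof.
move=> fL e e0; have [d d0 fLd] := fL e e0; exists d => // s Ds st.
by rewrite -normrN !fctE; have := fLd s Ds st; congr (`|_| <= _); ring.
Qed.

Lemma derivable_has_derivative_within (D : set R) (f : R -> R) (t : R) :
  derivable f t 1 -> has_derivative_within D f t (derive1 f t).
Proof.
move=> /cvgrPdist_le fD e e0; have /nbhs_ballP[r r0 rD] := fD e e0.
rewrite derive1E; exists r => // s _ st.
have [->|ts] := eqVneq s t; first by rewrite !subrr normr0 !mulr0 subrr normr0.
have st0 : s - t != 0 by rewrite subr_eq0.
have := rD (s - t) _ st0; rewrite /= [(s - t)%:A]mulr1 subrK => quot.
have -> : f s - f t - 'D_1 f t * (s - t) = (s - t) * ((s - t)^-1 *: (f s - f t) - 'D_1 f t).
  by rewrite /GRing.scale /=; field.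
rewrite normrM mulrC ler_wpM2r // distrC; apply: quot.
by rewrite -ball_normE /= sub0r normrN.
Qed.

Lemma has_derivative_within_quotient (D : set R) (f : R -> R) (t L : R) :
  (fun s => (f s - f t) / (s - t)) @ within (fun s => D s /\ s != t) (nbhs t) --> L ->
  has_derivative_within D f t L.
Proof.
move=> /cvgrPdist_le fL e e0; have /nbhs_ballP[r r0 rD] := fL e e0.
exists r => // s Ds st.
have [->|ts] := eqVneq s t; first by rewrite !subrr normr0 !mulr0 subrr normr0.
have st0 : s - t != 0 by rewrite subr_eq0.
have -> : f s - f t - L * (s - t) = (s - t) * ((f s - f t) / (s - t) - L) by field.
rewrite normrM mulrC ler_wpM2r // distrC; apply: rD (conj Ds ts).
by rewrite -ball_normE /= distrC.
Qed.

Lemma has_derivative_within_upper_slope (D : set R) (f : R -> R) (t L K x y : R) :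
  has_derivative_within D f t L -> L <= K -> (forall s, x <= s -> s <= y -> D s) ->
  upper_slope_le x y f K t.
Proof.
move=> fL LK xyD e e0; have [d d0 fLd] := fL e e0; exists d => // a b xa a_t t_b yb tda btd.
have right : f b - f t <= (L + e) * (b - t).
  have := fLd b (xyD b (le_trans xa (le_trans a_t t_b)) yb) (ltac:(rewrite ger0_norm; lra)).
  rewrite (ger0_norm (_ : 0 <= b - t)) ?subr_ge0 // => fb.
  have := ler_norm (f b - f t - L * (b - t)); nra.
have left : f t - f a <= (L + e) * (t - a).
  have := fLd a (xyD a xa (le_trans a_t (le_trans t_b yb))) (ltac:(rewrite ler0_norm; lra)).
  rewrite (ler0_norm (_ : a - t <= 0)) ?subr_le0 // => fa.
  have := ler_norm (- (f a - f t - L * (a - t))); rewrite normrN; nra.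
nra.
Qed.

Lemma fine_partition_telescope (F : R -> R) (P : R -> R -> R -> Prop) (x y : R) n p tau :
  fine_partition P x y n p tau -> \sum_(i < n) (F (p i.+1) - F (p i)) = F y - F x.
Proof.
by case=> p0 pn _; rewrite -(big_mkord xpredT (fun i => F (p i.+1) - F (p i)))
  telescope_sumr // p0 pn.
Qed.

Lemma upper_slope_mean_value (x y K : R) (f : R -> R) : x <= y ->
  (forall t, x <= t -> t <= y -> upper_slope_le x y f K t) -> f y - f x <= K * (y - x).
Proof.
move=> xy slope; apply: (@ler_slack _ _ _ (y - x)) => e e0.
pose P (t a b : R) := f b - f a <= (K + e) * (b - a).
have [n [p [tau fine]]] : exists n p tau, fine_partition P x y n p tau.
  apply: cousin => // t xt ty; have [d d0 fd] := slope t xt ty e e0; by exists d.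
have [_ _ pieces] := fine.
have yx : \sum_(i < n) (p i.+1 - p i) = y - x := fine_partition_telescope id fine.
rewrite -(fine_partition_telescope f fine) -mulrDl -yx mulr_sumr.
by apply: ler_sum => i _; have [] := pieces i (ltn_ord i).
Qed.

Lemma has_derivative_within_lipschitz (D : set R) (f f' : R -> R) (x y B : R) : x <= y ->
  (forall t, x <= t -> t <= y -> D t /\ has_derivative_within D f t (f' t) /\ `|f' t| <= B) ->
  `|f y - f x| <= B * (y - x).
Proof.
move=> xy fB; have xyD s : x <= s -> s <= y -> D s by move=> xs sy; have [] := fB s xs sy.
rewrite ler_norml; apply/andP; split.
- suff : (- f) y - (- f) x <= B * (y - x) by rewrite !fctE; lra.
  apply: upper_slope_mean_value => // t xt ty; have [_ [ft f'B]] := fB t xt ty.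
  apply: has_derivative_within_upper_slope (has_derivative_withinN ft) _ xyD.
  by have := ler_norm (- f' t); rewrite normrN; lra.
- apply: upper_slope_mean_value => // t xt ty; have [_ [ft f'B]] := fB t xt ty.
  apply: has_derivative_within_upper_slope ft _ xyD.
  by have := ler_norm (f' t); lra.
Qed.

End mean_value.

Section abs_continuous.
Variable R : realType.
Local Notation mu := (@lebesgue_measure R).

Lemma lebesgue_aeS (P Q : set R) :
  P `<=` Q -> {ae mu, forall t, P t} -> {ae mu, forall t, Q t}.
Proof. exact: (@filterS _ _ (ae_filter_ringOfSetsType mu)). Qed.

Lemma abs_continuous_on_sub (x y a b : R) (f : R -> R) :
  abs_continuous_on x y f -> x <= a -> b <= y -> abs_continuous_on a b f.
Proof.
move=> fAC xa yb e e0; have [d d0 fd] := fAC e e0; exists d => // n s t st ord.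
apply: fd => // i; have [ai [abi bi]] := st i.
by split; [exact: le_trans xa ai | split; last exact: le_trans bi yb].
Qed.

Lemma abs_continuous_onN (x y : R) (f : R -> R) :
  abs_continuous_on x y f -> abs_continuous_on x y (- f).
Proof.
move=> fAC e e0; have [d d0 fd] := fAC e e0; exists d => // n s t st ord len.
by rewrite opprfctE; under eq_bigr do rewrite -opprD normrN; exact: fd.
Qed.

Lemma sum_itv_lengths_le_measure n (a b : 'I_n -> R) (U : set R) : measurable U ->
  (forall i, a i <= b i) -> (forall i j : 'I_n, (i < j)%N -> b i <= a j) ->
  (forall i, [set` `[a i, b i[] `<=` U) -> ((\sum_(i < n) (b i - a i))%:E <= mu U)%E.
Proof.
move=> mU ab ord abU.
pose F i := [set` `[a i, b i[] : set R.
have mF i : measurable (F i) by exact: measurable_itv.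
have disjF : trivIset setT F.
  move=> i j _ _ [z [/= /andP[aiz zbi] /andP[ajz zbj]]].
  rewrite /= !bnd_simp in aiz zbi ajz zbj.
  apply/val_inj/eqP; rewrite eqn_leq; apply/andP; split; rewrite leqNgt; apply/negP.
  - by move=> /ord; lra.
  - by move=> /ord; lra.
have -> : (\sum_(i < n) (b i - a i))%:E = \sum_(i < n) mu (F i).
  rewrite -sumEFin; apply: eq_bigr => i _.
  rewrite /F lebesgue_measure_itv /= lte_fin; case: ltP => [_|ba]; first by rewrite -EFinD.
  by have -> : b i - a i = 0 by have := ab i; lra.
have muF : mu (\big[setU/set0]_(i < n) F i) = \sum_(i < n) mu (F i) :=
  measure_bigsetU_ord mu xpredT mF disjF.
rewrite -muF.
apply: le_measure; rewrite ?inE //; first by apply: bigsetU_measurable => i _; exact: mF.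
apply: (big_ind (fun X => X `<=` U)) => // [X Y XU YU z [/XU|/YU] //|i _].
exact: abU.
Qed.

Lemma ae_itv_null_set (x y : R) (Q : R -> Prop) :
  {ae mu, forall t, t \in `]x, y[ -> Q t} ->
  exists N : set R, [/\ measurable N, mu N = 0%E & forall t, x <= t -> t <= y -> ~ N t -> Q t].
Proof.
move=> [A [mA A0 QA]].
have null1 (r : R) : mu.-negligible [set r].
  by apply/negligibleP; [exact: measurable_set1 | exact: lebesgue_measure_set1].
have mN : measurable (A `|` [set x] `|` [set y]).
  by apply: measurableU; [apply: measurableU => //|]; exact: measurable_set1.
exists (A `|` [set x] `|` [set y]); split => //.
  have Anull : mu.-negligible A by exists A; split.
  by apply/(negligibleP _ mN)/(negligibleU _ (null1 y))/(negligibleU Anull (null1 x)).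
move=> t xt ty Nt; have xyQ : t \in `]x, y[ -> Q t.
  by apply: contrapT => nQ; apply: Nt; left; left; exact: QA.
apply: xyQ; rewrite in_itv /= !lt_neqAle xt ty !andbT.
by apply/andP; split; apply/eqP => tE; apply: Nt; [left; right | right].
Qed.

Lemma lebesgue_null_open_cover (N : set R) (d : R) : measurable N -> mu N = 0%E -> 0 < d ->
  exists U, [/\ open U, N `<=` U & (mu U < d%:E)%E].
Proof.
move=> mN N0 d0; have Nfin : (mu N < +oo)%E by rewrite N0 ltry.
have [U [oU NU UNd]] := lebesgue_regularity_outer mN Nfin d0.
exists U; split => //; rewrite -(setDUK NU) setUC.
apply: le_lt_trans (measureU2 _ _ _) _ => //.
  by apply: measurableD => //; exact: measurable_realfun.open_measurable.
by have -> : forall z, (z + mu N = z)%E by move=> z; rewrite N0 adde0.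
Qed.

(* Pieces tagged in N lie in U, so they are short and absolute continuity controls the
   increment of f over them; on the other pieces the slope bound applies. *)
Lemma fine_partition_abs_continuous_bound (x y K e d : R) (f : R -> R) (N U : set R) n p tau :
  measurable U -> (mu U < d%:E)%E ->
  (forall n (a b : 'I_n -> R), (forall i, x <= a i /\ a i <= b i /\ b i <= y) ->
    (forall i j : 'I_n, (i < j)%N -> b i <= a j) ->
    \sum_(i < n) (b i - a i) < d -> \sum_(i < n) `|f (b i) - f (a i)| < e) ->
  fine_partition (fun t a b => (N t -> [set` `[a, b[] `<=` U) /\
    (~ N t -> f b - f a <= K * (b - a))) x y n p tau ->
  f y - f x <= K * (y - x) + e + `|K| * d.
Proof.
move=> mU Ud fAC fine; have [p0 pn pieces] := fine; have ple := fine_partition_le fine.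
pose bad (i : 'I_n) := `[< N (tau i) >].
pose a (i : 'I_n) := p i.
pose b (i : 'I_n) := if bad i then p i.+1 else p i.
have pS (i : 'I_n) : p i <= p i.+1 by apply: ple; rewrite leqnSn ltn_ord.
have ab i : a i <= b i by rewrite /a /b; case: ifP.
have bpS i : b i <= p i.+1 by rewrite /b; case: ifP.
have disj (i j : 'I_n) : (i < j)%N -> b i <= a j.
  by move=> ij; apply: le_trans (bpS i) (ple _ _ _); rewrite ij ltnW.
have badU i : [set` `[a i, b i[] `<=` U.
  move=> z /=; rewrite /a /b /bad in_itv /=; case: asboolP => [Nt|_] /andP[az zb]; last first.
    by have := le_lt_trans az zb; rewrite ltxx.
  by have [_ _ [sub _]] := pieces i (ltn_ord i); apply: (sub Nt); rewrite /= in_itv /= az zb.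
have bad_len : \sum_(i < n) (b i - a i) < d.
  by rewrite -lte_fin; exact: le_lt_trans (sum_itv_lengths_le_measure mU ab disj badU) Ud.
have bad_var : \sum_(i < n) `|f (b i) - f (a i)| < e.
  apply: fAC bad_len => // i; split; first by rewrite /a -p0; apply: ple; exact: ltnW.
  by split; [exact: ab | rewrite -pn; apply: le_trans (bpS i) (ple _ _ _); rewrite ltn_ord leqnn].
have piece (i : 'I_n) : f (p i.+1) - f (p i) <=
    K * (p i.+1 - p i) + `|f (b i) - f (a i)| + `|K| * (b i - a i).
  have [_ _ [_ good]] := pieces i (ltn_ord i).
  rewrite /a /b /bad; case: asboolP => [_|Nt]; last first.
    by rewrite !subrr normr0 mulr0 !addr0; exact: good.
  have := pS i; have := ler_norm (f (p i.+1) - f (p i)); have := ler_norm (- K).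
  rewrite normrN; nra.
have yx : \sum_(i < n) (p i.+1 - p i) = y - x := fine_partition_telescope id fine.
rewrite -(fine_partition_telescope f fine); apply: le_trans (ler_sum _ (fun i _ => piece i)) _.
rewrite !big_split /= -!mulr_sumr yx.
have : `|K| * \sum_(i < n) (b i - a i) <= `|K| * d by rewrite ler_wpM2l // ltW.
lra.
Qed.

Lemma abs_continuous_upper_slope_mean_value (x y K : R) (f : R -> R) : x <= y ->
  abs_continuous_on x y f -> {ae mu, forall t, t \in `]x, y[ -> upper_slope_le x y f K t} ->
  f y - f x <= K * (y - x).
Proof.
move=> xy fAC /ae_itv_null_set[N [mN N0 slopeN]].
apply: (@ler_slack _ _ _ (y - x + 2)) => e e0.
have [d0 d00 fACe] := fAC e e0.
have Ke1 : 0 < `|K + e| + 1 by rewrite ltr_wpDl.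
pose d := Num.min d0 (e / (`|K + e| + 1)).
have d_gt0 : 0 < d by rewrite lt_min d00 divr_gt0.
have dd0 : d <= d0 by rewrite ge_min lexx.
have dKe : d * (`|K + e| + 1) <= e by rewrite -ler_pdivlMr // ge_min lexx orbT.
have [U [oU NU Ud]] := lebesgue_null_open_cover mN N0 d_gt0.
pose P (t a b : R) := (N t -> [set` `[a, b[] `<=` U) /\
  (~ N t -> f b - f a <= (K + e) * (b - a)).
have [n [p [tau fine]]] : exists n p tau, fine_partition P x y n p tau.
  apply: cousin => // t xt ty; have [Nt|Nt] := pselect (N t).
    have /nbhs_ballP[r r0 rU] : nbhs t U by apply: open_nbhs_nbhs; split => //; exact: NU.
    exists r => // a b _ a_t t_b _ tra btr; split => // _ z /=; rewrite in_itv /= => /andP[az zb].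
    by apply: rU; rewrite -ball_normE /= ltr_norml; apply/andP; split; lra.
  have [r r0 slope] := slopeN t xt ty Nt e e0.
  by exists r => // a b xa a_t t_b yb tra btr; split => // _; apply: slope.
have mU : measurable U by exact: measurable_realfun.open_measurable.
have {}fACe n a b ab ord len := fACe n a b ab ord (lt_le_trans len dd0).
have := fine_partition_abs_continuous_bound mU Ud fACe fine.
have := normr_ge0 (K + e); nra.
Qed.

Lemma abs_continuous_derive1_le (x y K : R) (f : R -> R) : x <= y ->
  abs_continuous_on x y f ->
  {ae mu, forall t, t \in `]x, y[ -> derivable f t 1 /\ derive1 f t <= K} ->
  f y - f x <= K * (y - x).
Proof.
move=> xy fAC fK; apply: abs_continuous_upper_slope_mean_value => //.
apply: lebesgue_aeS fK => t fK /fK[df dfK].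
apply: (@has_derivative_within_upper_slope _ setT) dfK _ => //.
exact: derivable_has_derivative_within.
Qed.

Lemma abs_continuous_derive1_ge (x y K : R) (f : R -> R) : x <= y ->
  abs_continuous_on x y f ->
  {ae mu, forall t, t \in `]x, y[ -> derivable f t 1 /\ K <= derive1 f t} ->
  K * (y - x) <= f y - f x.
Proof.
move=> xy fAC fK.
suff : (- f) y - (- f) x <= - K * (y - x) by rewrite !fctE mulNr; lra.
apply: abs_continuous_derive1_le => //; first exact: abs_continuous_onN.
apply: lebesgue_aeS fK => t fK /fK[df dfK].
by split; [exact: derivableN | rewrite derive1N // lerN2].
Qed.

End abs_continuous.

Section gfun_aweight.
Variable R : realType.

Lemma gfun_gt0 (s : R) : 0 < s < 1 -> 0 < gfun s.
Proof. by move=> /andP[s0 s1]; rewrite /gfun mulr_gt0 ?exprn_gt0 ?subr_gt0. Qed.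

Lemma gfun_le1 (s : R) : 0 < s < 1 -> gfun s <= 1.
Proof. by move=> /andP[s0 s1]; rewrite /gfun expr2; nra. Qed.

Lemma gfun_ratio (x y : R) : 0 < x < 1 -> 0 < y < 1 ->
  `|x - y| <= gfun y / 2 -> gfun y / 8 <= gfun x.
Proof.
rewrite /gfun => /andP[x0 x1] /andP[y0 y1] xy.
have yy : y * y <= 1 by nra.
have gy : y ^+ 2 * (1 - y) <= y by rewrite expr2; nra.
have gy' : y ^+ 2 * (1 - y) <= 1 - y by rewrite expr2; nra.
have := ler_norm (x - y); have := ler_norm (y - x); rewrite distrC => h1 h2.
have xy2 : y ^+ 2 / 4 <= x ^+ 2 by rewrite !expr2; nra.
have : y ^+ 2 / 4 * ((1 - y) / 2) <= x ^+ 2 * (1 - x).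
  by apply: ler_pM => //; [rewrite divr_ge0 ?sqr_ge0 | rewrite divr_ge0 //; lra | lra].
lra.
Qed.

Lemma aweight_side (sigma lam mu t : R) : t <= sigma \/ 1 - sigma <= t ->
  aweight sigma lam mu t = lam.
Proof. by rewrite /aweight => -[->|->] //; rewrite orbT. Qed.

Lemma aweight_mid (sigma lam mu t : R) : sigma < t -> t < 1 - sigma ->
  aweight sigma lam mu t = - mu.
Proof. by rewrite /aweight => st ts; rewrite !leNgt st ts. Qed.

End gfun_aweight.

Section solution.
Variables (R : realType) (sigma lam mu : R) (u v : R -> R).
Hypotheses (sigma_gt0 : 0 < sigma) (sigma_lt_half : sigma < 2^-1).
Hypotheses (lam_gt0 : 0 < lam) (mu_gt0 : 0 < mu).
Hypothesis u_derive : forall t, t \in `[0, 1] ->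
  (fun s => (u s - u t) / (s - t)) @ within (fun s => s \in `[0, 1] /\ s != t) (nbhs t) --> v t.
Hypothesis u_range : forall t, t \in `[0, 1] -> 0 < u t /\ u t < 1.
Hypothesis v_ac : abs_continuous_on 0 1 v.
Hypothesis v_ode : {ae @lebesgue_measure R, forall t, t \in `]0, 1[ ->
  derivable v t 1 /\ - derive1 v t = aweight sigma lam mu t * gfun (u t)}.
Hypotheses (v0 : v 0 = 0) (v1 : v 1 = 0).

Let u_in (t : R) : 0 <= t -> t <= 1 -> 0 < u t < 1.
Proof.
by move=> t0 t1; have [] := u_range (_ : t \in `[0, 1]); [rewrite in_itv /= t0 | move=> -> ->].
Qed.

Lemma v_drop_ge (a b k : R) : 0 <= a -> a <= b -> b <= 1 ->
  (forall t, a < t -> t < b -> k <= aweight sigma lam mu t * gfun (u t)) ->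
  k * (b - a) <= v a - v b.
Proof.
move=> a0 ab b1 kw.
suff : v b - v a <= - k * (b - a) by rewrite mulNr; lra.
apply: abs_continuous_derive1_le (abs_continuous_on_sub v_ac a0 b1) _ => //.
apply: lebesgue_aeS v_ode => t ode; rewrite in_itv /= => /andP[a_t t_b].
have [dv vw] := ode (ltac:(rewrite in_itv /=; apply/andP; split; lra)).
by split => //; have := kw t a_t t_b; lra.
Qed.

Lemma v_drop_le (a b k : R) : 0 <= a -> a <= b -> b <= 1 ->
  (forall t, a < t -> t < b -> aweight sigma lam mu t * gfun (u t) <= k) ->
  v a - v b <= k * (b - a).
Proof.
move=> a0 ab b1 wk.
suff : - k * (b - a) <= v b - v a by rewrite mulNr; lra.
apply: abs_continuous_derive1_ge (abs_continuous_on_sub v_ac a0 b1) _ => //.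
apply: lebesgue_aeS v_ode => t ode; rewrite in_itv /= => /andP[a_t t_b].
have [dv vw] := ode (ltac:(rewrite in_itv /=; apply/andP; split; lra)).
by split => //; have := wk t a_t t_b; lra.
Qed.

Lemma v_nonincr_side (a b : R) : 0 <= a -> a <= b -> b <= 1 ->
  b <= sigma \/ 1 - sigma <= a -> v b <= v a.
Proof.
move=> a0 ab b1 side; have := @v_drop_ge a b 0 a0 ab b1; rewrite mul0r subr_ge0; apply.
move=> t a_t t_b; rewrite aweight_side; last by case: side; [left | right]; lra.
by rewrite mulr_ge0 ?ltW ?gfun_gt0 ?u_in //; lra.
Qed.

Lemma v_nondecr_mid (a b : R) : sigma <= a -> a <= b -> b <= 1 - sigma -> v a <= v b.
Proof.
move=> sa ab bs; have s0 := sigma_gt0.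
have a0 : 0 <= a by lra.
have b1 : b <= 1 by lra.
have := @v_drop_le a b 0 a0 ab b1.
rewrite mul0r subr_le0; apply => t a_t t_b; rewrite aweight_mid; try lra.
by rewrite mulNr oppr_le0 mulr_ge0 ?ltW ?gfun_gt0 ?u_in //; lra.
Qed.

Lemma norm_v_le (r : R) : 0 <= r -> r <= 1 -> `|v r| <= v (1 - sigma) - v sigma.
Proof.
move=> r0 r1; have s0 := sigma_gt0; have s1 := sigma_lt_half.
have vs : v sigma <= 0 by rewrite -v0; apply: v_nonincr_side; lra.
have v1s : 0 <= v (1 - sigma) by rewrite -v1; apply: v_nonincr_side; lra.
rewrite ler_norml; have [rs|sr] := lerP r sigma.
  have : v sigma <= v r by apply: v_nonincr_side; lra.
  have : v r <= 0 by rewrite -v0; apply: v_nonincr_side; lra.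
  by move=> *; apply/andP; split; lra.
have [rs'|s'r] := lerP r (1 - sigma).
  have : v sigma <= v r by apply: v_nondecr_mid; lra.
  have : v r <= v (1 - sigma) by apply: v_nondecr_mid; lra.
  by move=> *; apply/andP; split; lra.
have : v r <= v (1 - sigma) by apply: v_nonincr_side; lra.
have : 0 <= v r by rewrite -v1; apply: v_nonincr_side; lra.
by move=> *; apply/andP; split; lra.
Qed.

Lemma u_lipschitz (s t : R) : 0 <= s -> s <= t -> t <= 1 ->
  `|u t - u s| <= (v (1 - sigma) - v sigma) * (t - s).
Proof.
move=> s0 st t1; apply: (@has_derivative_within_lipschitz _ (fun r => r \in `[0, 1]) _ v) => //.
move=> r sr rt; have r01 : r \in `[0, 1] by rewrite in_itv /=; apply/andP; split; lra.
split=> //; split; first exact: has_derivative_within_quotient (u_derive r01).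
by apply: norm_v_le; lra.
Qed.

Lemma flux_le (S : R) : (forall t, 0 <= t -> t <= 1 -> gfun (u t) <= S) ->
  [/\ - v sigma <= lam * sigma * S, v (1 - sigma) <= lam * sigma * S &
      v (1 - sigma) - v sigma <= mu * (1 - 2 * sigma) * S].
Proof.
move=> gS; have s0 := sigma_gt0; have s1 := sigma_lt_half.
have lamg t : 0 <= t -> t <= 1 -> lam * gfun (u t) <= lam * S.
  by move=> t0 t1; rewrite ler_pM2l // gS.
split.
- suff : v 0 - v sigma <= lam * S * (sigma - 0) by rewrite v0; lra.
  apply: v_drop_le; rewrite ?lexx //; try lra.
  by move=> t t0 ts; rewrite aweight_side; [apply: lamg | left]; lra.
- suff : v (1 - sigma) - v 1 <= lam * S * (1 - (1 - sigma)) by rewrite v1; lra.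
  apply: v_drop_le; rewrite ?lexx //; try lra.
  by move=> t st t1; rewrite aweight_side; [apply: lamg | right]; lra.
- suff : - (mu * S) * (1 - sigma - sigma) <= v sigma - v (1 - sigma) by lra.
  apply: v_drop_ge; try lra.
  move=> t st ts; rewrite aweight_mid // mulNr lerN2 ler_pM2l //.
  by apply: gS; lra.
Qed.

Lemma flux_ge (m : R) : (forall t, 0 <= t -> t <= 1 -> m <= gfun (u t)) ->
  [/\ lam * sigma * m <= - v sigma, lam * sigma * m <= v (1 - sigma) &
      mu * (1 - 2 * sigma) * m <= v (1 - sigma) - v sigma].
Proof.
move=> mg; have s0 := sigma_gt0; have s1 := sigma_lt_half.
have lamg t : 0 <= t -> t <= 1 -> lam * m <= lam * gfun (u t).
  by move=> t0 t1; rewrite ler_pM2l // mg.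
split.
- suff : lam * m * (sigma - 0) <= v 0 - v sigma by rewrite v0; lra.
  apply: v_drop_ge; rewrite ?lexx //; try lra.
  by move=> t t0 ts; rewrite aweight_side; [apply: lamg | left]; lra.
- suff : lam * m * (1 - (1 - sigma)) <= v (1 - sigma) - v 1 by rewrite v1; lra.
  apply: v_drop_ge; rewrite ?lexx //; try lra.
  by move=> t st t1; rewrite aweight_side; [apply: lamg | right]; lra.
- suff : v sigma - v (1 - sigma) <= - (mu * m) * (1 - sigma - sigma) by lra.
  apply: v_drop_le; try lra.
  move=> t st ts; rewrite aweight_mid // mulNr lerN2 ler_pM2l //.
  by apply: mg; lra.
Qed.

Lemma gfun_u_sup : exists S, [/\ 0 < S, forall t, 0 <= t -> t <= 1 -> gfun (u t) <= S &
  exists t0, [/\ 0 <= t0, t0 <= 1 & S <= 2 * gfun (u t0)]].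
Proof.
pose E := [set gfun (u t) | t in [set t | 0 <= t <= 1]].
have hE : has_sup E.
  split; first by exists (gfun (u 0)), 0; rewrite //= lexx ler01.
  by exists 1 => _ [t /andP[t0 t1] <-]; exact: gfun_le1 (u_in t0 t1).
have gS t : 0 <= t -> t <= 1 -> gfun (u t) <= sup E.
  by move=> t0 t1; apply: sup_upper_bound => //; exists t => //=; rewrite t0 t1.
have S0 : 0 < sup E := lt_le_trans (gfun_gt0 (u_in (lexx 0) ler01)) (gS 0 (lexx 0) ler01).
have [_ [t0 /andP[t00 t01] <-] St0] := sup_adherent (divr_gt0 S0 (ltr0Sn _ 1)) hE.
by exists (sup E); split => //; exists t0; split => //; lra.
Qed.

Lemma gfun_u_lower_bound (S s : R) : 0 <= s -> s <= 1 -> S <= 2 * gfun (u s) ->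
  v (1 - sigma) - v sigma <= S / 4 -> forall t, 0 <= t -> t <= 1 -> S / 16 <= gfun (u t).
Proof.
move=> s0 s1 Ss small t t0 t1.
have F0 : 0 <= v (1 - sigma) - v sigma := le_trans (normr_ge0 _) (norm_v_le (lexx 0) ler01).
have close : `|u t - u s| <= gfun (u s) / 2.
  have [ts|st] := lerP t s.
    by rewrite distrC; apply: le_trans (u_lipschitz t0 ts s1) _; nra.
  by apply: le_trans (u_lipschitz s0 (ltW st) t1) _; nra.
have := gfun_ratio (u_in t0 t1) (u_in s0 s1) close; lra.
Qed.

Lemma solution_mu_lower : mu <= 4^-1 -> lam * sigma / 8 <= mu * (1 - 2 * sigma).
Proof.
move=> mu_small; have s0 := sigma_gt0; have s1 := sigma_lt_half; have m0 := mu_gt0.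
have [S [S0 gS [t0 [t00 t01 St0]]]] := gfun_u_sup.
have [_ _ fluxS] := flux_le gS.
have small : v (1 - sigma) - v sigma <= S / 4.
  by apply: le_trans fluxS _; rewrite [S / 4]mulrC ler_pM2r //; nra.
have [Al Bl _] := flux_ge (gfun_u_lower_bound t00 t01 St0 small).
have : lam * sigma / 8 * S <= mu * (1 - 2 * sigma) * S by lra.
by rewrite ler_pM2r.
Qed.

Lemma solution_mu_upper : lam * sigma <= 8^-1 -> mu * (1 - 2 * sigma) <= 32 * lam * sigma.
Proof.
move=> lam_small; have s0 := sigma_gt0; have s1 := sigma_lt_half.
have [S [S0 gS [t0 [t00 t01 St0]]]] := gfun_u_sup.
have [As Bs _] := flux_le gS.
have small : v (1 - sigma) - v sigma <= S / 4 by nra.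
have [_ _ Ml] := flux_ge (gfun_u_lower_bound t00 t01 St0 small).
have : mu * (1 - 2 * sigma) * S <= 32 * lam * sigma * S by lra.
by rewrite ler_pM2r.
Qed.

End solution.

Lemma is_solution_mu_bounds (R : realType) (sigma lam mu : R) (u : R -> R) :
  0 < sigma -> sigma < 2^-1 -> 0 < lam -> 0 < mu -> is_solution sigma lam mu u ->
  (mu <= 4^-1 -> lam * sigma / 8 <= mu * (1 - 2 * sigma)) /\
  (lam * sigma <= 8^-1 -> mu * (1 - 2 * sigma) <= 32 * lam * sigma).
Proof.
move=> s0 s1 l0 m0 [v [du [_ [vAC [urange [ode [v0 v1]]]]]]].
split; [exact: (solution_mu_lower s0 s1 l0 m0 du urange vAC ode v0 v1) |
        exact: (solution_mu_upper s0 s1 l0 m0 du urange vAC ode v0 v1)].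
Qed.

Theorem theorem1p1 (R : realType) (sigma : R) (hsigma : 0 < sigma /\ sigma < 2^-1) :
  exists mu0s : R -> R,
    (forall lam : R, 0 < lam ->
       0 < mu0s lam /\
       forall mu : R, 0 < mu -> mu < mu0s lam ->
         ~ (exists u : R -> R, is_solution sigma lam mu u)) /\
    (exists2 lams : R, 0 < lams &
       forall lam : R, 0 < lam -> lam < lams ->
         exists2 mu0ss : R, mu0s lam < mu0ss &
           forall mu : R, mu0ss < mu ->
             ~ (exists u : R -> R, is_solution sigma lam mu u)).
Proof.
have [s0 s1] := hsigma.
have s2 : 0 < 1 - 2 * sigma by lra.
pose mu0s lam := lam * sigma / (8 * (1 + lam)).
have mu0s_gt0 lam : 0 < lam -> 0 < mu0s lam.
  by move=> l0; rewrite divr_gt0 ?mulr_gt0 //; lra.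
exists mu0s; split.
  move=> lam l0; split=> [|mu m0]; first exact: mu0s_gt0.
  rewrite ltr_pdivlMr; last lra.
  move=> small [u /(is_solution_mu_bounds s0 s1 l0 m0)[lower _]].
  by have := lower (ltac:(nra)); nra.
exists 4^-1 => // lam l0 l1.
exists (mu0s lam + 32 * lam * sigma / (1 - 2 * sigma)).
  by rewrite ltrDl divr_gt0 //; nra.
move=> mu large; have m0 : 0 < mu.
  by apply: lt_trans large; rewrite addr_gt0 ?mu0s_gt0 // divr_gt0 //; nra.
move=> [u /(is_solution_mu_bounds s0 s1 l0 m0)[_ upper]].
have : 32 * lam * sigma / (1 - 2 * sigma) < mu by have := mu0s_gt0 _ l0; lra.
by rewrite ltr_pdivrMr //; have := upper (ltac:(nra)); lra.
Qed.
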